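(* Let $n,r\ge3$, let $h$ be a hermitian form on $\mathbb{C}^n$ of signature $(n-1,1)$, and let $x=(L_1,\dots,L_r)$ be an $r$-tuple of $h$-isotropic lines in $\mathbb{C}^n$. Then: (1) $x$ is semi-stable if and only if for every isotropic line $L$ one has $\#\{i: L=L_i\}\le r/2$; (2) if $r$ is even, then $x$ is semi-stable if and only if there is a derangement $\sigma$ of $\{1,\dots,r\}$ of order $2$ such that $s_\sigma(x)\neq0$.
   Context: $x$ is called semi-stable if the $r$-tuple of flags $(L_i,L_i^\perp)_{i=1,\dots,r}$ (line contained in hyperplane, $L^\perp$ the $h$-orthogonal) is semi-stable for the diagonal action of $\mathrm{SL}_n(\mathbb{C})$ on the $r$-th power of the variety of line-hyperplane flags, linearized by the embedding $(L_i,H_i)\mapsto(L_i,H_i^\perp)$ into $(\mathbb{P}(\mathbb{C}^n)\times\mathbb{P}((\mathbb{C}^n)^\vee))^r$ with line bundle $\bigotimes_i\mathrm{pr}_i^*(\mathcal{O}(1)\boxtimes\mathcal{O}(1))$ (i.e. some invariant section of a positive tensor power does not vanish). For a derangement (fixed-point-free permutation) $\sigma$, $s_\sigma(x)=\prod_{i=1}^r h(v_i,v_{\sigma(i)})$, where $v_i$ generates $L_i$ (its vanishing does not depend on the choice). *)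

From HB Require Import structures.
From mathcomp Require Import all_boot all_order all_algebra all_fingroup.
From mathcomp Require Import mpoly.
Set Implicit Arguments. Unset Strict Implicit. Unset Printing Implicit Defensive.
Import Order.TTheory GRing.Theory Num.Theory.
Local Open Scope ring_scope.

Section Defs.
Variables (C : numClosedFieldType) (n r : nat).

Definition conjmx p q (A : 'M[C]_(p, q)) : 'M[C]_(p, q) := map_mx Num.conj A.

(* hermitian form with Gram matrix H, conjugate-linear in the first argument:
   h(u, v) = conj(u) H v^T  (vectors of C^n as row vectors) *)
Definition hform (H : 'M[C]_n) (u v : 'rV[C]_n) : C := (conjmx u *m H *m v^T) 0 0.

(* H is hermitian of signature (n-1, 1): there is an invertible P with
   P^* H P = diag(1, ..., 1, -1) (Sylvester normal form) *)
Definition hermitian_sig_n1_1 (H : 'M[C]_n) : Prop :=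
  (conjmx H)^T = H /\
  exists2 P : 'M[C]_n, P \in unitmx &
    (conjmx P)^T *m H *m P = diag_mx (\row_(i < n) (if val i == n.-1 then -1 else 1)).

Definition isotropic (H : 'M[C]_n) (u : 'rV[C]_n) : Prop := hform H u u = 0.

(* The line L_i spanned by v i is sent to the point ([v_i], [w_i]) of
   P(C^n) x P((C^n)^v), where w_i is the linear form x |-> h(v_i, x), whose
   kernel is L_i^perp (i.e. [w_i] = annihilator of the hyperplane L_i^perp).
   A linear form is encoded by its row of coefficients: w(x) = w *m x^T. *)
Definition dual_pt (H : 'M[C]_n) (u : 'rV[C]_n) : 'rV[C]_n := conjmx u *m H.

(* coordinates on (C^n x (C^n)^v)^r: the first r*n variables are the
   coordinates of v_1..v_r, the last r*n those of w_1..w_r *)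
Definition NV := (r * n + r * n)%N.

Definition env (v w : 'I_r -> 'rV[C]_n) : 'I_NV -> C :=
  fun k => match split k with
           | inl a => mxvec (\matrix_(i < r, j < n) v i 0 j) 0 a
           | inr b => mxvec (\matrix_(i < r, j < n) w i 0 j) 0 b
           end.

Definition vidx (i : 'I_r) (j : 'I_n) : 'I_NV := lshift (r * n) (mxvec_index i j).
Definition widx (i : 'I_r) (j : 'I_n) : 'I_NV := rshift (r * n) (mxvec_index i j).

(* F is a section of (O(k) ⊠ O(k))^{⊠ r}: multihomogeneous of degree k in
   each v_i and of degree k in each w_i *)
Definition multihom (k : nat) (F : {mpoly C[NV]}) : Prop :=
  forall m : 'X_{1..NV}, m \in msupp F ->
    forall i : 'I_r, (\sum_(j < n) m (vidx i j) = k)%N /\ (\sum_(j < n) m (widx i j) = k)%N.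

(* SL_n-invariance for the diagonal action g.(v, w) = (g v, w o g^-1) *)
Definition SL_invariant (F : {mpoly C[NV]}) : Prop :=
  forall g : 'M[C]_n, \det g = 1 ->
    forall v w : 'I_r -> 'rV[C]_n,
      F.@[env (fun i => v i *m g^T) (fun i => w i *m invmx g)] = F.@[env v w].

Definition semistable (H : 'M[C]_n) (v : 'I_r -> 'rV[C]_n) : Prop :=
  exists k : nat, (0 < k)%N /\ exists F : {mpoly C[NV]},
    multihom k F /\ SL_invariant F /\ F.@[env v (fun i => dual_pt H (v i))] != 0.

Definition derangement (s : {perm 'I_r}) : Prop := forall i, s i != i.

Definition s_sigma (H : 'M[C]_n) (v : 'I_r -> 'rV[C]_n) (s : {perm 'I_r}) : C :=
  \prod_(i < r) hform H (v i) (v (s i)).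

End Defs.

(* Semi-stability is witnessed by the SL_n-invariant sections
   F_s(v, w) = prod_i w_i(v_(s i)) of degree one, whose value at x is s_sigma(x).
   If no isotropic line carries more than r/2 of the L_i, sort the indices so
   that equal lines are consecutive and send each index to the one r/2 places
   further, cyclically: this permutation moves every index to a different line,
   and it is an involution when r is even. In signature (n-1, 1) two distinct
   isotropic lines are never orthogonal, so s_sigma(x) != 0.
   Conversely, if more than r/2 of the L_i equal an isotropic line u, let g(t)
   act by t on u, by t^-1 on a line y with h(u, y) != 0, and trivially on a
   complement of u + y. An invariant F of degree k satisfies F(x) = F(g(t) x),
   and g(t) multiplies both components of every point on u by t; homogeneity then
   gives F(x) t^(2kr) = t^(4km) P(t) with P polynomial and 2m > r, so F(x) = 0. *)

From Pilot Require Import Defs.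
From HB Require Import structures.
From mathcomp Require Import all_boot all_order all_algebra all_fingroup.
From mathcomp Require Import mpoly.
From mathcomp Require Import cyclic ring zify.
Import GRing.Theory Num.Theory.
Set Implicit Arguments. Unset Strict Implicit. Unset Printing Implicit Defensive.

Section OppositeInSortedOrder.
Variables (T : eqType) (r : nat) (c : 'I_r -> T).
Hypothesis small_fibres : forall i, 2 * #|[set j | c j == c i]| <= r.

Let key i := index (c i) (map c (enum 'I_r)).

Let key_eq i j : (key i == key j) = (c i == c j).
Proof.
apply/eqP/eqP => [hk|]; last by rewrite /key => ->.
have mem k : c k \in map c (enum 'I_r) by apply: map_f; rewrite mem_enum.
by rewrite -(nth_index (c i) (mem i)) -(nth_index (c i) (mem j)) -/(key i) hk.
Qed.

Let s := sort (relpre key leq) (enum 'I_r).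
Let pos i := index i s.

Let size_s : size s = r. Proof. by rewrite size_sort size_enum_ord. Qed.
Let mem_s i : i \in s. Proof. by rewrite mem_sort mem_enum. Qed.
Let uniq_s : uniq s. Proof. by rewrite sort_uniq enum_uniq. Qed.
Let pos_lt i : pos i < r. Proof. by rewrite -size_s index_mem mem_s. Qed.

Let key_between i p x q : p <= x <= q -> q < r ->
  key (nth i s p) = key (nth i s q) -> key (nth i s x) = key (nth i s p).
Proof.
move=> /andP [px xq] qr hpq.
have s_sorted : sorted (relpre key leq) s.
  exact: sort_sorted (fun a b => leq_total (key a) (key b)) _.
have mono := sorted_leq_nth (fun _ _ _ => @leq_trans _ _ _) (fun _ => leqnn _) i s_sorted.
have inr y : y <= q -> y \in [pred m | m < size s].
  by rewrite inE size_s => yq; apply: leq_ltn_trans qr.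
apply/eqP; rewrite eqn_leq {1}hpq.
by rewrite [_ <= _](mono x q) ?[_ <= _](mono p x) ?inr //; apply: leq_trans xq.
Qed.

Let fibre_card_ge_interval i p q : p <= q < r ->
  c (nth i s p) = c (nth i s q) -> q - p < #|[set j | c j == c (nth i s p)]|.
Proof.
move=> /andP [pq qr] /eqP; rewrite -key_eq => /eqP hpq.
have -> : (q - p).+1 = size [seq nth i s x | x <- iota p (q - p).+1] by rewrite size_map size_iota.
rewrite cardE; apply: uniq_leq_size.
  rewrite map_inj_in_uniq ?iota_uniq // => x y; rewrite !mem_iota => hx hy /eqP.
  by rewrite nth_uniq ?uniq_s ?size_s //; [move/eqP | lia | lia].
move=> y /mapP [x]; rewrite mem_iota => hx ->.
by rewrite mem_enum inE -key_eq (key_between (p := p) (q := q)) //; lia.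
Qed.

Definition opposite i := nth i s ((pos i + r %/ 2) %% r).

Let pos_opposite i : pos (opposite i) = (pos i + r %/ 2) %% r.
Proof.
by rewrite /pos /opposite index_uniq ?uniq_s // size_s ltn_pmod // (leq_trans (ltn0Sn i)).
Qed.

Let nth_pos i j : nth j s (pos i) = i.
Proof. by rewrite (set_nth_default i) ?nth_index ?mem_s // size_s pos_lt. Qed.

Lemma opposite_inj : injective opposite.
Proof.
move=> i j /(congr1 pos); rewrite !pos_opposite => /eqP.
by rewrite eqn_modDr !modn_small ?pos_lt // => /eqP hij; rewrite -(nth_pos i i) hij nth_pos.
Qed.

Lemma opposite_neq i : c (opposite i) != c i.
Proof.
apply/eqP => hi; set p := pos i; set q := pos (opposite i).
have [pr qr] : p < r /\ q < r by split; apply: pos_lt.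
have hq : q = p + r %/ 2 \/ q + r = p + r %/ 2.
  rewrite /q pos_opposite; have [hlt|hge] := ltnP (p + r %/ 2) r.
    by left; rewrite modn_small.
  by right; rewrite -{1}(subnK hge) modnDr modn_small; lia.
have := small_fibres i.
have [pq|qp] := leqP p q.
  have := @fibre_card_ge_interval i p q; rewrite pq qr /q !nth_pos hi.
  by move/(_ isT erefl); lia.
have := @fibre_card_ge_interval i q p; rewrite (ltnW qp) pr /q !nth_pos hi.
by move/(_ isT erefl); lia.
Qed.

Lemma opposite_involutive : ~~ odd r -> involutive opposite.
Proof.
move=> r_even i; rewrite {1}/opposite pos_opposite modnDml -addnA.
have -> : r %/ 2 + r %/ 2 = r by move: r_even; rewrite -(odd_double_half r) -divn2; lia.
by rewrite modnDr modn_small ?pos_lt // nth_pos.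
Qed.

End OppositeInSortedOrder.

Lemma exists_perm_moving_fibres (T : eqType) (r : nat) (c : 'I_r -> T) :
  (forall i, 2 * #|[set j | c j == c i]| <= r) ->
  exists s : {perm 'I_r}, (forall i, c (s i) != c i) /\ (~~ odd r -> (s * s = 1)%g).
Proof.
move=> small_fibres; exists (perm (@opposite_inj _ _ c)); split=> [i|r_even].
  by rewrite permE opposite_neq.
by apply/permP => i; rewrite permM !permE opposite_involutive.
Qed.

Lemma order_involution (gT : finGroupType) (x : gT) :
  (x * x = 1)%g -> x != 1%g -> #[x]%g = 2.
Proof.
move=> xx x_neq1; apply/prime_nt_dvdP => //; first by rewrite order_eq1.
by rewrite order_dvdn expgS expg1 xx.
Qed.

Local Open Scope ring_scope.

(* mxalgebra's conjmx (change of basis) shadows the entrywise conjugate of Defs. *)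
Notation conjCmx := Pilot.Defs.conjmx.

Section Polynomials.
Variable R : numDomainType.

Lemma poly_eq0_of_nonzero_roots (p : {poly R}) :
  (forall t, t != 0 -> p.[t] = 0) -> p = 0.
Proof.
move=> hp; apply/eqP; apply: contraT => p_neq0.
have := max_poly_roots p_neq0 (rs := [seq i.+1%:R | i <- iota 0 (size p)]).
rewrite size_map size_iota ltnn; apply.
  by apply/allP => _ /mapP [i _ ->]; rewrite /root hp // pnatr_eq0.
by rewrite map_inj_uniq ?iota_uniq // => i j /eqP; rewrite eqr_nat eqSS => /eqP.
Qed.

Lemma eq0_of_vanishing_order (x : R) (p : {poly R}) (a b : nat) : (a < b)%N ->
  (forall t, t != 0 -> x * t ^+ a = p.[t] * t ^+ b) -> x = 0.
Proof.
move=> ab hx.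
have q0 : x *: 'X^a - p * 'X^b = 0.
  apply: poly_eq0_of_nonzero_roots => t t0.
  by rewrite hornerD hornerN hornerZ hornerM !hornerXn hx // subrr.
have := congr1 (fun q : {poly R} => q`_a) q0.
by rewrite /= coefB coefZ coefXn eqxx mulr1 coefMXn ab subr0 coef0.
Qed.

Lemma meval_horner (N : nat) (F : {mpoly R[N]}) (E : 'I_N -> {poly R}) :
  exists p : {poly R}, forall t, F.@[fun k => (E k).[t]] = p.[t].
Proof.
exists (\sum_(m <- msupp F) F@_m *: \prod_k E k ^+ m k) => t.
rewrite mevalE horner_sum; apply: eq_bigr => m _.
by rewrite hornerZ horner_prod; congr (_ * _); apply: eq_bigr => k _; rewrite horner_exp.
Qed.

End Polynomials.


Section Coordinates.
Variables (C : numClosedFieldType) (n r : nat).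
Implicit Types (v w : 'I_r -> 'rV[C]_n).

Lemma env_vidx v w i j : env v w (vidx i j) = v i 0 j.
Proof. by rewrite /env /vidx (unsplitK (inl _)) mxvecE mxE. Qed.

Lemma env_widx v w i j : env v w (widx i j) = w i 0 j.
Proof. by rewrite /env /widx (unsplitK (inr _)) mxvecE mxE. Qed.

Lemma NV_indexP (k : 'I_(NV n r)) :
  (exists i j, k = vidx i j) \/ (exists i j, k = widx i j).
Proof.
rewrite -(splitK k); case: (split k) => [a|b]; [left | right].
  by case/mxvec_indexP: a => i j; exists i, j.
by case/mxvec_indexP: b => i j; exists i, j.
Qed.

Let mxvec_index_eq (i i' : 'I_r) (j j' : 'I_n) :
  (mxvec_index i j == mxvec_index i' j') = ((i, j) == (i', j')).
Proof. by apply/eqP/eqP => [/cast_ord_inj/enum_rank_inj|[-> ->]]. Qed.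

Lemma eq_vidx i j i' j' : (vidx i j == vidx i' j' :> 'I_(NV n r)) = (i == i') && (j == j').
Proof. by rewrite /vidx eq_shift mxvec_index_eq xpair_eqE. Qed.

Lemma eq_widx i j i' j' : (widx i j == widx i' j' :> 'I_(NV n r)) = (i == i') && (j == j').
Proof. by rewrite /widx eq_shift mxvec_index_eq xpair_eqE. Qed.

Lemma eq_vidx_widx i j i' j' : (vidx i j == widx i' j' :> 'I_(NV n r)) = false.
Proof. by rewrite /vidx /widx eq_shift. Qed.

Lemma eq_widx_vidx i j i' j' : (widx i j == vidx i' j' :> 'I_(NV n r)) = false.
Proof. by rewrite /vidx /widx eq_shift. Qed.

Lemma big_prod_NV (R : comPzSemiRingType) (f : 'I_(NV n r) -> R) :
  \prod_k f k = \prod_i ((\prod_j f (vidx i j)) * (\prod_j f (widx i j))).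
Proof.
rewrite big_split /= [LHS](big_split_ord _ xpredT) /=.
have reindex_rn (g : 'I_(r * n) -> R) : \prod_a g a = \prod_i \prod_j g (mxvec_index i j).
  rewrite (reindex (uncurry (@mxvec_index r n))) /=; last exact: subon_bij (curry_mxvec_bij r n).
  by rewrite pair_bigA; apply: eq_bigr => -[i j].
by rewrite !reindex_rn.
Qed.

Lemma meval_env_quadratic (F : {mpoly C[NV n r]}) (A0 A1 A2 B0 B1 B2 : 'I_r -> 'rV[C]_n) :
  exists p : {poly C}, forall t,
    F.@[env (fun i => A0 i + t *: A1 i + t ^+ 2 *: A2 i)
            (fun i => B0 i + t *: B1 i + t ^+ 2 *: B2 i)] = p.[t].
Proof.
pose E k := (env A0 B0 k)%:P + env A1 B1 k *: 'X + env A2 B2 k *: 'X^2.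
have [p hp] := meval_horner F E; exists p => t; rewrite -hp; apply: meval_eq => k.
rewrite !hornerD hornerC !hornerZ hornerX hornerXn; case: (NV_indexP k) => -[i [j ->]].
  by rewrite !env_vidx !mxE; ring.
by rewrite !env_widx !mxE; ring.
Qed.

End Coordinates.

Section Multihomogeneous.
Variables (C : numClosedFieldType) (n r k : nat) (F : {mpoly C[NV n r]}).
Hypothesis hF : multihom k F.

Lemma meval_multihom_scale (la mu : 'I_r -> C) (v w v' w' : 'I_r -> 'rV[C]_n) :
  (forall i, v' i = la i *: v i) -> (forall i, w' i = mu i *: w i) ->
  F.@[env v' w'] = \prod_i (la i * mu i) ^+ k * F.@[env v w].
Proof.
move=> hv hw; rewrite !mevalE big_distrr /=; apply: eq_big_seq => m hm.
rewrite mulrCA; congr (_ * _).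
pose s := env (fun i => const_mx (la i) : 'rV[C]_n) (fun i => const_mx (mu i)).
have -> : \prod_l env v' w' l ^+ m l = \prod_l s l ^+ m l * \prod_l env v w l ^+ m l.
  rewrite -big_split; apply: eq_bigr => l _ /=; rewrite -exprMn.
  by case: (NV_indexP l) => -[i [j ->]]; rewrite /s ?env_vidx ?env_widx ?hv ?hw !mxE.
congr (_ * _); rewrite big_prod_NV; apply: eq_bigr => i _.
have [degv degw] := hF hm i.
rewrite exprMn; congr (_ * _).
  by under eq_bigr do rewrite /s env_vidx mxE; rewrite prodrXr degv.
by under eq_bigr do rewrite /s env_widx mxE; rewrite prodrXr degw.
Qed.

(* Rescaling g by an n-th root of det g^-1 lands in SL_n, and multihomogeneity
   absorbs the scalar. *)
Lemma SL_invariant_GL (n_gt0 : (0 < n)%N) (g g' : 'M[C]_n) v w :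
  SL_invariant F -> g *m g' = 1%:M ->
  F.@[env (fun i => v i *m g^T) (fun i => w i *m g')] = F.@[env v w].
Proof.
move=> hI gg'; have [g_unit _] := mulmx1_unit gg'.
have g'E : invmx g = g' by rewrite -[invmx g]mulmx1 -gg' mulmxA mulVmx // mul1mx.
have detg_neq0 : \det g != 0 by rewrite -unitfE -unitmxE.
pose c := n.-root ((\det g)^-1).
have cn : c ^+ n = (\det g)^-1 by rewrite rootCK.
have c_neq0 : c != 0.
  by move: (invr_neq0 detg_neq0); rewrite -cn expf_eq0 n_gt0.
have detcg : \det (c *: g) = 1 by rewrite detZ cn mulVf.
have cg_unit : c *: g \in unitmx by rewrite unitmxE detcg unitr1.
rewrite -(hI (c *: g) detcg v w) invmxZ // g'E.
rewrite (@meval_multihom_scale (fun _ => c) (fun _ => c^-1)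
   (fun i => v i *m g^T) (fun i => w i *m g')
   (fun i => v i *m (c *: g)^T) (fun i => w i *m (c^-1 *: g'))).
- by rewrite divff // expr1n big1 ?mul1r.
- by move=> i; rewrite linearZ /= scalemxAr.
- by move=> i; rewrite scalemxAr.
Qed.

End Multihomogeneous.

Section HermitianForm.
Variables (C : numClosedFieldType) (n : nat).
Implicit Types (H : 'M[C]_n) (u w x z : 'rV[C]_n).

Lemma conjCmxZ p q c (A : 'M[C]_(p, q)) : conjCmx (c *: A) = c^* *: conjCmx A.
Proof. by rewrite /Defs.conjmx map_mxZ. Qed.

Lemma conjCmxB p q (A B : 'M[C]_(p, q)) : conjCmx (A - B) = conjCmx A - conjCmx B.
Proof. by rewrite /Defs.conjmx map_mxB. Qed.

Lemma conjCmxM p q s (A : 'M[C]_(p, q)) (B : 'M[C]_(q, s)) :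
  conjCmx (A *m B) = conjCmx A *m conjCmx B.
Proof. by rewrite /Defs.conjmx map_mxM. Qed.

Lemma conjCmxT p q (A : 'M[C]_(p, q)) : conjCmx A^T = (conjCmx A)^T.
Proof. by rewrite /Defs.conjmx map_trmx. Qed.

Lemma conjCmxK p q : involutive (@conjCmx C p q).
Proof. by move=> A; apply/matrixP => i j; rewrite !mxE conjCK. Qed.

Lemma conjCmx_eq0 p q (A : 'M[C]_(p, q)) : (conjCmx A == 0) = (A == 0).
Proof. exact: map_mx_eq0. Qed.

Lemma hformZl H u w c : hform H (c *: u) w = c^* * hform H u w.
Proof. by rewrite /hform conjCmxZ -!scalemxAl !mxE. Qed.

Lemma hformZr H u w c : hform H u (c *: w) = c * hform H u w.
Proof. by rewrite /hform linearZ /= -scalemxAr !mxE. Qed.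

Lemma hformBl H u u' w : hform H (u - u') w = hform H u w - hform H u' w.
Proof. by rewrite /hform conjCmxB !mulmxBl !mxE. Qed.

Lemma hformBr H u w w' : hform H u (w - w') = hform H u w - hform H u w'.
Proof. by rewrite /hform linearB /= mulmxBr !mxE. Qed.

Lemma hformC H u w : (conjCmx H)^T = H -> hform H w u = (hform H u w)^*.
Proof.
move=> hH; have mx11T (M : 'M[C]_1) : M 0 0 = M^T 0 0 by rewrite mxE.
have -> : (hform H u w)^* = (conjCmx (conjCmx u *m H *m w^T)) 0 0 by rewrite mxE.
by rewrite !conjCmxM conjCmxK conjCmxT [RHS]mx11T !trmx_mul trmxK hH mulmxA.
Qed.

Lemma hform_mulmx H (P : 'M[C]_n) x z :
  hform H (x *m P^T) (z *m P^T) = hform ((conjCmx P)^T *m H *m P) x z.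
Proof. by rewrite /hform conjCmxM conjCmxT trmx_mul trmxK !mulmxA. Qed.

Lemma hform_diag (d : 'rV[C]_n) x z :
  hform (diag_mx d) x z = \sum_j (x 0 j)^* * d 0 j * z 0 j.
Proof. by rewrite /hform mul_mx_diag mxE; apply: eq_bigr => j _; rewrite !mxE. Qed.

Lemma hermitian_sig_n1_1_unitmx H : hermitian_sig_n1_1 H -> H \in unitmx.
Proof.
case=> _ [P _ hP].
have : (conjCmx P)^T *m H *m P \in unitmx.
  rewrite hP unitmxE det_diag unitfE; apply/prodf_neq0 => i _; rewrite mxE.
  by case: ifP => _; rewrite ?oppr_eq0 oner_eq0.
by rewrite !unitmx_mul => /andP [/andP [_ ->] _].
Qed.

Section Signature.
Hypothesis n_gt0 : (0 < n)%N.
Let last_coord : 'I_n := Ordinal (etrans (ltn_predL n) n_gt0).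
Let D : 'M[C]_n := diag_mx (\row_(i < n) (if val i == n.-1 then -1 else 1)).

(* D is positive definite on the hyperplane where the last coordinate vanishes. *)
Lemma sig_isotropic_eq0 x : hform D x x = 0 -> x 0 last_coord = 0 -> x = 0.
Proof.
move=> + xN; rewrite hform_diag (bigD1 last_coord) //= xN conjC0 !mul0r add0r.
under eq_bigr => j hj do rewrite mxE ifN // mulr1 mulrC.
move=> /psumr_eq0P hx; apply/rowP => j; rewrite mxE.
have [->|hj] := eqVneq j last_coord; first by [].
by apply/eqP; rewrite -mul_conjC_eq0 hx // => i _; rewrite mul_conjC_ge0.
Qed.

Lemma sig_isotropic_orthogonal x z : x != 0 -> hform D x x = 0 -> hform D z z = 0 ->
  hform D x z = 0 -> exists c, z = c *: x.
Proof.
move=> x_neq0 ixx izz ixz.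
have izx : hform D z x = 0.
  rewrite hformC ?ixz ?conjC0 // /Defs.conjmx map_diag_mx tr_diag_mx.
  by congr diag_mx; apply/rowP => i; rewrite !mxE; case: ifP; rewrite ?rmorphN1 ?rmorph1.
have xN : x 0 last_coord != 0 by apply: contra_neq x_neq0; apply: sig_isotropic_eq0.
exists (z 0 last_coord / x 0 last_coord); apply/eqP; rewrite -subr_eq0; apply/eqP.
apply: sig_isotropic_eq0; last by rewrite !mxE divfK // subrr.
by rewrite hformBl !hformBr !hformZl !hformZr ixx izz ixz izx !mulr0 !subr0.
Qed.

Lemma isotropic_orthogonal_eqmx H u w : hermitian_sig_n1_1 H -> u != 0 -> w != 0 ->
  isotropic H u -> isotropic H w -> hform H u w = 0 -> (w == u)%MS.
Proof.
case=> _ [P P_unit hP] u_neq0 w_neq0 iu iw uw.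
have hD y y' : hform H (y *m P^T) (y' *m P^T) = hform D y y' by rewrite hform_mulmx hP.
have PTK (y : 'rV[C]_n) : y *m (invmx P)^T *m P^T = y.
  by rewrite -mulmxA -trmx_mul mulmxV // trmx1 mulmx1.
have [c zE] : exists c, w *m (invmx P)^T = c *: (u *m (invmx P)^T).
  apply: sig_isotropic_orthogonal; rewrite -?hD ?PTK //.
  by apply: contra_neq u_neq0 => u0; rewrite -(PTK u) u0 mul0mx.
have wE : w = c *: u by rewrite -(PTK w) zE -scalemxAl PTK.
have c_neq0 : c != 0 by apply: contra_neq w_neq0 => c0; rewrite wE c0 scale0r.
by rewrite wE; apply/eqmxP; apply: eqmx_scale.
Qed.

End Signature.
End HermitianForm.

Section PairingInvariants.
Variables (C : numClosedFieldType) (n r : nat).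

Definition has_multideg (dv dw : 'I_r -> nat) (F : {mpoly C[NV n r]}) :=
  forall m, m \in msupp F -> forall i,
    (\sum_j m (vidx i j) = dv i)%N /\ (\sum_j m (widx i j) = dw i)%N.

Lemma has_multideg_sum dv dw (I : Type) (s : seq I) (F : I -> {mpoly C[NV n r]}) :
  (forall x, has_multideg dv dw (F x)) -> has_multideg dv dw (\sum_(x <- s) F x).
Proof.
move=> hF; elim/big_ind: _ => // [m|p q hp hq m /msuppD_le]; first by rewrite msupp0.
by rewrite mem_cat => /orP [/hp|/hq].
Qed.

Lemma has_multidegM dv dw dv' dw' p q :
  has_multideg dv dw p -> has_multideg dv' dw' q ->
  has_multideg (fun i => dv i + dv' i)%N (fun i => dw i + dw' i)%N (p * q).
Proof.
move=> hp hq m /msuppM_le /allpairsP [[m1 m2] /= [h1 h2 ->]] i.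
have [<- <-] := hp _ h1 i; have [<- <-] := hq _ h2 i.
by split; rewrite -big_split /=; apply: eq_bigr => j _; rewrite mnmDE.
Qed.

Lemma has_multideg_prod (I : Type) (s : seq I) (dv dw : I -> 'I_r -> nat)
    (F : I -> {mpoly C[NV n r]}) :
  (forall x, has_multideg (dv x) (dw x) (F x)) ->
  has_multideg (fun i => \sum_(x <- s) dv x i)%N (fun i => \sum_(x <- s) dw x i)%N
    (\prod_(x <- s) F x).
Proof.
move=> hF; elim: s => [|x s ih] m.
  rewrite big_nil msupp1 inE => /eqP -> i; rewrite !big_nil.
  by split; apply: big1 => j _; rewrite mnm0E.
by rewrite big_cons => /(has_multidegM (hF x) ih) hm i; rewrite !big_cons; apply: hm.
Qed.

Let sum_delta (j0 : 'I_n) (b : bool) : (\sum_(j < n) (b && (j0 == j)) = b)%N.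
Proof.
rewrite (bigD1 j0) //= eqxx andbT big1 ?addn0 // => j.
by rewrite eq_sym => /negbTE ->; rewrite andbF.
Qed.

Lemma has_multideg_XwXv (i0 i1 : 'I_r) (j0 : 'I_n) :
  has_multideg (fun i => (i1 == i) : nat) (fun i => (i0 == i) : nat)
    ('X_(widx i0 j0) * 'X_(vidx i1 j0)).
Proof.
move=> m; rewrite -mpolyXD msuppX inE => /eqP -> i; split.
  by under eq_bigr do rewrite mnmDE !mnm1E eq_widx_vidx eq_vidx add0n; rewrite sum_delta.
by under eq_bigr do rewrite mnmDE !mnm1E eq_vidx_widx eq_widx addn0; rewrite sum_delta.
Qed.

Definition pairing_invariant (s : {perm 'I_r}) : {mpoly C[NV n r]} :=
  \prod_i \sum_j 'X_(widx i j) * 'X_(vidx (s i) j).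

Lemma pairing_invariant_multihom s : multihom 1 (pairing_invariant s).
Proof.
have hdeg : has_multideg (fun i => \sum_x (s x == i) : nat)%N (fun i => \sum_x (x == i) : nat)%N
    (pairing_invariant s).
  by apply: has_multideg_prod => x; apply: has_multideg_sum => j; apply: has_multideg_XwXv.
move=> m /hdeg hm i; have [-> ->] := hm i; split.
  under eq_bigr do rewrite (canF_eq (permK s)).
  by rewrite (bigD1 (s^-1 i)%g) //= eqxx big1 // => k /negbTE ->.
by rewrite (bigD1 i) //= eqxx big1 // => k /negbTE ->.
Qed.

Lemma meval_pairing_invariant s v w :
  (pairing_invariant s).@[env v w] = \prod_i (w i *m (v (s i))^T) 0 0.
Proof.
rewrite rmorph_prod; apply: eq_bigr => i _; rewrite rmorph_sum mxE; apply: eq_bigr => j _.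
by rewrite rmorphM /= !mevalXU env_vidx env_widx mxE.
Qed.

Lemma pairing_invariant_SL s : SL_invariant (pairing_invariant s).
Proof.
move=> g detg v w; rewrite !meval_pairing_invariant; apply: eq_bigr => i _.
have g_unit : g \in unitmx by rewrite unitmxE detg unitr1.
by rewrite trmx_mul trmxK mulmxA -(mulmxA _ (invmx g)) mulVmx // mulmx1.
Qed.

Lemma semistable_of_s_sigma (H : 'M[C]_n) (v : 'I_r -> 'rV[C]_n) s :
  s_sigma H v s != 0 -> semistable H v.
Proof.
move=> s_neq0; exists 1%N; split => //; exists (pairing_invariant s).
rewrite meval_pairing_invariant; split; first exact: pairing_invariant_multihom.
by split; first exact: pairing_invariant_SL.
Qed.

End PairingInvariants.

Section Cocharacter.
Variables (C : numClosedFieldType) (n : nat).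
Implicit Types (x z : 'rV[C]_n).

Definition dot x z : C := (x *m z^T) 0 0.

Lemma dotC x z : dot x z = dot z x.
Proof. by rewrite /dot -[z *m _]trmxK trmx_mul trmxK [RHS]mxE. Qed.

Lemma dotZl c x z : dot (c *: x) z = c * dot x z.
Proof. by rewrite /dot -scalemxAl mxE. Qed.

Lemma dotZr c x z : dot x (c *: z) = c * dot x z.
Proof. by rewrite dotC dotZl dotC. Qed.

Lemma dotBl x x' z : dot (x - x') z = dot x z - dot x' z.
Proof. by rewrite /dot mulmxBl !mxE. Qed.

Lemma dot_conjCmx x : x != 0 -> dot x (conjCmx x) != 0.
Proof.
apply: contra_neq => /eqP; rewrite /dot mxE => /eqP /psumr_eq0P x0.
apply/rowP => j; rewrite mxE; apply/eqP; rewrite -mul_conjC_eq0.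
have := x0 _ j isT; rewrite !mxE => -> // i _.
by rewrite !mxE mul_conjC_ge0.
Qed.

Lemma mulmx_rank1 x (p q : 'rV[C]_n) : x *m (p^T *m q) = dot x p *: q.
Proof. by rewrite mulmxA [x *m _]mx11_scalar mul_scalar_mx. Qed.

Variables (u a y d : 'rV[C]_n).
Hypotheses (au : dot a u = 1) (ay : dot a y = 0) (du : dot d u = 0) (dy : dot d y = 1).

(* The cocharacter t |-> diag(t, 1, ..., 1, t^-1) in a basis starting with u and
   ending with y; (a, d) are the corresponding dual coordinates. *)
Definition cochar (t : C) : 'M[C]_n :=
  1%:M + (t - 1) *: (u^T *m a) + (t^-1 - 1) *: (y^T *m d).

Definition cochar_inv (t : C) : 'M[C]_n :=
  1%:M + (t^-1 - 1) *: (u^T *m a) + (t - 1) *: (y^T *m d).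

Lemma cocharV t : t != 0 -> cochar t *m cochar_inv t = 1%:M.
Proof.
move=> t_neq0; rewrite /cochar /cochar_inv.
set A := u^T *m a; set B := y^T *m d.
have rank1M (p q p' q' : 'rV[C]_n) :
    (p^T *m q) *m (p'^T *m q') = dot q p' *: (p^T *m q').
  by rewrite mulmxA -(mulmxA p^T) [q *m _]mx11_scalar mul_mx_scalar -scalemxAl.
have [AA AB BA BB] : [/\ A *m A = A, A *m B = 0, B *m A = 0 & B *m B = B].
  by rewrite !rank1M au ay du dy !scale1r !scale0r.
rewrite !mulmxDl !mulmxDr !mul1mx !mulmx1 -!scalemxAl -!scalemxAr !scalerA.
rewrite AA AB BA BB !scaler0 !addr0.
by apply/matrixP => i j; rewrite !mxE; field.
Qed.

Lemma act_cochar t x :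
  x *m (cochar t)^T = x + (t - 1) *: (dot x a *: u) + (t^-1 - 1) *: (dot x d *: y).
Proof.
rewrite /cochar !linearD !linearZ /= trmx1 !trmx_mul !trmxK mulmx1 !mulmx_rank1.
by apply/rowP => j; rewrite !mxE; ring.
Qed.

Lemma act_cochar_inv t z :
  z *m cochar_inv t = z + (t^-1 - 1) *: (dot z u *: a) + (t - 1) *: (dot z y *: d).
Proof. by rewrite /cochar_inv !mulmxDr mulmx1 -!scalemxAr !mulmx_rank1. Qed.

Lemma act_cochar_u t : u *m (cochar t)^T = t *: u.
Proof.
rewrite act_cochar dotC au [dot u d]dotC du scale0r scaler0 addr0 scale1r.
by rewrite -{1}[u]scale1r -scalerDl addrC subrK.
Qed.

Lemma act_cochar_inv_d t : d *m cochar_inv t = t *: d.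
Proof.
rewrite act_cochar_inv du dy scale0r scaler0 addr0 scale1r.
by rewrite -{1}[d]scale1r -scalerDl addrC subrK.
Qed.

Lemma scaled_act_cochar t x : t != 0 -> t *: (x *m (cochar t)^T) =
  dot x d *: y + t *: (x - dot x a *: u - dot x d *: y) + t ^+ 2 *: (dot x a *: u).
Proof. by move=> t_neq0; rewrite act_cochar; apply/rowP => j; rewrite !mxE; field. Qed.

Lemma scaled_act_cochar_inv t z : t != 0 -> t *: (z *m cochar_inv t) =
  dot z u *: a + t *: (z - dot z u *: a - dot z y *: d) + t ^+ 2 *: (dot z y *: d).
Proof. by move=> t_neq0; rewrite act_cochar_inv; apply/rowP => j; rewrite !mxE; field. Qed.

End Cocharacter.

Section Destabilization.
Variables (C : numClosedFieldType) (n r : nat) (H : 'M[C]_n) (u : 'rV[C]_n).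
Hypotheses (hH : hermitian_sig_n1_1 H) (u_neq0 : u != 0) (iu : isotropic H u).

Let d := dual_pt H u.
Let y := (dot d (conjCmx d))^-1 *: conjCmx d.
Let a0 := (dot u (conjCmx u))^-1 *: conjCmx u.
Let a := a0 - dot a0 y *: d.

Let d_neq0 : d != 0.
Proof.
apply: contra_neq u_neq0 => d0; apply/eqP; rewrite -conjCmx_eq0.
have H_unit := hermitian_sig_n1_1_unitmx hH.
by rewrite -[conjCmx u]mulmx1 -(mulmxV H_unit) mulmxA -/(dual_pt H u) -/d d0 mul0mx.
Qed.

Let du : dot d u = 0. Proof. exact: iu. Qed.
Let dy : dot d y = 1. Proof. by rewrite dotZr mulVf ?(dot_conjCmx d_neq0). Qed.
Let ay : dot a y = 0. Proof. by rewrite dotBl dotZl dy mulr1 subrr. Qed.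
Let au : dot a u = 1.
Proof.
by rewrite dotBl dotZl du mulr0 subr0 dotZl [dot _ u]dotC mulVf ?(dot_conjCmx u_neq0).
Qed.

Variables (k : nat) (F : {mpoly C[NV n r]}) (v : 'I_r -> 'rV[C]_n).
Hypotheses (n_gt0 : (0 < n)%N) (k_gt0 : (0 < k)%N) (hF : multihom k F) (hI : SL_invariant F).

Let w i := dual_pt H (v i).
Let S := [set i | (v i == u)%MS].
Let g := cochar u a y d.
Let g' := cochar_inv u a y d.

Let act_line i t : i \in S -> v i *m (g t)^T = t *: v i /\ w i *m g' t = t *: w i.
Proof.
rewrite inE /w /dual_pt => /andP [/submxP [c ->] _].
rewrite [c]mx11_scalar !mul_scalar_mx conjCmxZ -!scalemxAl -[conjCmx u *m H]/d.
by rewrite act_cochar_u // act_cochar_inv_d // !scalerA !(mulrC t).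
Qed.

Let lam (t : C) i := if i \in S then t ^+ 2 else 1.
Let V0 i := if i \in S then v i else dot (v i) d *: y.
Let V1 i := if i \in S then 0 else v i - dot (v i) a *: u - dot (v i) d *: y.
Let V2 i := if i \in S then 0 else dot (v i) a *: u.
Let W0 i := if i \in S then w i else dot (w i) u *: a.
Let W1 i := if i \in S then 0 else w i - dot (w i) u *: a - dot (w i) y *: d.
Let W2 i := if i \in S then 0 else dot (w i) y *: d.
Let curve_v (t : C) i := V0 i + t *: V1 i + t ^+ 2 *: V2 i.
Let curve_w (t : C) i := W0 i + t *: W1 i + t ^+ 2 *: W2 i.

Let scaled_orbit t i : t != 0 ->
  t *: (v i *m (g t)^T) = lam t i *: curve_v t i /\
  t *: (w i *m g' t) = lam t i *: curve_w t i.
Proof.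
move=> t_neq0; rewrite /lam /curve_v /curve_w /V0 /V1 /V2 /W0 /W1 /W2.
case: ifP => [iS|_]; last by rewrite !scale1r scaled_act_cochar ?scaled_act_cochar_inv.
by have [-> ->] := act_line t iS; rewrite !scaler0 !addr0 !scalerA expr2.
Qed.

(* F(x) = F(g(t) x) by invariance, and t g(t) x is the curve rescaled by lam t,
   so both powers of t come from the multihomogeneity of F. *)
Let orbit_identity t : t != 0 ->
  F.@[env v w] * t ^+ (2 * k * r) = F.@[env (curve_v t) (curve_w t)] * t ^+ (4 * k * #|S|).
Proof.
move=> t_neq0.
have E1 := meval_multihom_scale hF (la := fun _ => t) (mu := fun _ => t)
  (v := fun i => v i *m (g t)^T) (w := fun i => w i *m g' t) (fun i => erefl) (fun i => erefl).
have E2 := meval_multihom_scale hF (la := lam t) (mu := lam t)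
  (v := curve_v t) (w := curve_w t) (fun i => (scaled_orbit i t_neq0).1)
  (fun i => (scaled_orbit i t_neq0).2).
rewrite (SL_invariant_GL hF) ?cocharV // in E1.
have prod_lam : \prod_i (lam t i * lam t i) ^+ k = t ^+ (4 * k * #|S|).
  rewrite (eq_bigr (fun i => if i \in S then t ^+ (4 * k) else 1)) => [|i _].
    by rewrite -big_mkcond prodr_const -exprM.
  by rewrite /lam; case: ifP => _; rewrite ?mulr1 ?expr1n // -exprD -exprM.
rewrite E1 prod_lam prodr_const card_ord -expr2 -!exprM mulnA in E2.
by rewrite mulrC E2 mulrC.
Qed.

Lemma meval_destabilized : (r < 2 * #|S|)%N -> F.@[env v w] = 0.
Proof.
move=> S_large; have [p hp] := meval_env_quadratic F V0 V1 V2 W0 W1 W2.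
apply: (@eq0_of_vanishing_order _ _ p (2 * k * r) (4 * k * #|S|)); first by nia.
by move=> t t_neq0; rewrite orbit_identity // -hp.
Qed.

End Destabilization.

Section SemistableIsotropic.
Variables (C : numClosedFieldType) (n r : nat) (H : 'M[C]_n) (v : 'I_r -> 'rV[C]_n).
Hypotheses (n_gt0 : (0 < n)%N) (hH : hermitian_sig_n1_1 H).
Hypothesis hv : forall i, v i != 0 /\ isotropic H (v i).

Lemma semistable_fibre_bound : semistable H v ->
  forall w, w != 0 -> isotropic H w -> (2 * #|[set i | (v i == w)%MS]| <= r)%N.
Proof.
move=> [k [k_gt0 [F [hF [hI F_neq0]]]]] w w_neq0 iw; rewrite leqNgt.
apply/negP => large; move: F_neq0.
by rewrite (meval_destabilized hH w_neq0 iw n_gt0 k_gt0 hF hI large) eqxx.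
Qed.

Lemma exists_perm_moving_lines :
  (forall w, w != 0 -> isotropic H w -> (2 * #|[set i | (v i == w)%MS]| <= r)%N) ->
  exists s : {perm 'I_r}, (forall i, ~~ (v (s i) == v i)%MS) /\ (~~ odd r -> (s * s = 1)%g).
Proof.
move=> bound; have [|s [hs ss]] := @exists_perm_moving_fibres _ _ (fun i => <<v i>>%MS).
  move=> i; have [vi_neq0 vi_iso] := hv i.
  rewrite (eq_card (B := [set j | (v j == v i)%MS])) ?bound // => j.
  by rewrite !inE; apply/eqP/genmxP.
by exists s; split=> // i; move: (hs i); apply: contra => /genmxP ->.
Qed.

Lemma s_sigma_neq0 (s : {perm 'I_r}) :
  (forall i, ~~ (v (s i) == v i)%MS) -> s_sigma H v s != 0.
Proof.
move=> hs; apply/prodf_neq0 => i _; move: (hs i); apply: contraNneq => orth.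
have [vi_neq0 vi_iso] := hv i; have [vsi_neq0 vsi_iso] := hv (s i).
exact (isotropic_orthogonal_eqmx n_gt0 hH vi_neq0 vsi_neq0 vi_iso vsi_iso orth).
Qed.

End SemistableIsotropic.

Unset Implicit Arguments.
Set Strict Implicit.

Theorem proposition4p15 (C : numClosedFieldType) (n r : nat)
    (H : 'M[C]_n) (v : 'I_r -> 'rV[C]_n) :
  (3 <= n)%N -> (3 <= r)%N -> hermitian_sig_n1_1 H ->
  (forall i, v i != 0 /\ isotropic H (v i)) ->
  (semistable H v <->
     (forall w : 'rV[C]_n, w != 0 -> isotropic H w ->
        (2 * #|[set i : 'I_r | (v i == w)%MS]| <= r)%N))
  /\
  (~~ odd r ->
     (semistable H v <->
        exists s : {perm 'I_r},
          derangement s /\ #[s]%g = 2%N /\ s_sigma H v s != 0)).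
Proof.
move=> n_ge3 r_ge3 hH hv; have n_gt0 : (0 < n)%N by apply: leq_trans n_ge3.
have bound := semistable_fibre_bound n_gt0 hH.
have moving := exists_perm_moving_lines hv.
have nonzero := s_sigma_neq0 n_gt0 hH hv.
split.
  split; first exact: bound.
  by case/moving=> s [hs _]; apply: semistable_of_s_sigma (nonzero s hs).
move=> r_even; split; last by case=> s [_ [_ /semistable_of_s_sigma]].
case/bound/moving=> s [hs ss]; exists s.
have s_der : derangement s by move=> i; apply: contraNneq (hs i) => ->; rewrite submx_refl.
split=> //; split; last exact: nonzero.
apply: order_involution (ss r_even) _; apply: contraTneq isT => s1.
by have := s_der (Ordinal (ltnW (ltnW r_ge3))); rewrite s1 perm1 eqxx.
Qed.
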